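(* Let $n\ge2$ and let $\mathsf u$ be a subword of $\bm\lambda_n$ with $u_1\cdots u_{n(n-1)}=e$. If $(\!(a,b)\!)$ is a reflection appearing in $\textsc{inv}(\mathsf u)$, then $|b-a|\le n-1$.
   Context: $\widetilde S_n$ is the group, under composition, of bijections $w:\mathbb Z\to\mathbb Z$ with $w(i+n)=w(i)+n$ and $\sum_{i=1}^n w(i)=\binom{n+1}2$. For $i\not\equiv j\pmod n$, $(\!(i,j)\!)$ is the reflection swapping $i+kn$ and $j+kn$ for all $k$; $(\!(i,j)\!)=(\!(j,i)\!)=(\!(i+kn,j+kn)\!)$, so $|j-i|$ depends only on the reflection. $s_i=(\!(i,i+1)\!)$ for $i\in\{0,\dots,n-1\}$. $\bm\lambda_n$ is the word $[s_0,\dots,s_{n-1}]$ repeated $n-1$ times with $j$-th letter $\sigma_j=s_{(j-1)\bmod n}$ (index in $\{0,\dots,n-1\}$). A subword is $\mathsf u=[u_1,\dots,u_{n(n-1)}]$ with $u_j\in\{\sigma_j,e\}$. Write $u_{(j)}=u_1\cdots u_j$ with $u_{(0)}=e$. $\textsc{inv}(\mathsf u)=[t_1,\dots,t_{n(n-1)}]$ with $t_j=u_{(j-1)}\sigma_j u_{(j-1)}^{-1}$. *)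

From Stdlib Require Import ZArith Lia.
Open Scope Z_scope.

(* The reflection ((i,j)) of the affine symmetric group ~S_n: it swaps
   i + k n and j + k n for every integer k (meaningful when i, j are not
   congruent mod n); all other integers are fixed. *)
Definition refl (n : nat) (i j : Z) : Z -> Z := fun x =>
  let N := Z.of_nat n in
  if Z.eqb (x mod N) (i mod N) then x + (j - i)
  else if Z.eqb (x mod N) (j mod N) then x + (i - j)
  else x.

Definition sref (n : nat) (i : Z) : Z -> Z := refl n i (i + 1).

(* j-th letter of the word lambda_n = [s_0,...,s_{n-1}]^(n-1):
   sigma_j = s_{(j-1) mod n}, for j >= 1 *)
Definition sigma (n j : nat) : Z -> Z := sref n (Z.of_nat ((j - 1) mod n)).

(* A subword u of lambda_n is encoded by b : nat -> bool:
   u_j = sigma_j if b j = true, u_j = e otherwise (1 <= j <= n(n-1)). *)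
Definition letter (n : nat) (b : nat -> bool) (j : nat) : Z -> Z :=
  if b j then sigma n j else (fun x => x).

Fixpoint uprefix (n : nat) (b : nat -> bool) (k : nat) : Z -> Z :=
  match k with
  | O => fun x => x
  | S k' => fun x => uprefix n b k' (letter n b k x)
  end.

(* (u_(k))^{-1} = u_k ... u_2 u_1, since every u_j is an involution *)
Fixpoint uprefix_inv (n : nat) (b : nat -> bool) (k : nat) : Z -> Z :=
  match k with
  | O => fun x => x
  | S k' => fun x => letter n b k (uprefix_inv n b k' x)
  end.

(* t_j = u_(j-1) sigma_j u_(j-1)^{-1}, the j-th entry of inv(u) *)
Definition tinv (n : nat) (b : nat -> bool) (j : nat) : Z -> Z :=
  fun x => uprefix n b (j - 1) (sigma n j (uprefix_inv n b (j - 1) x)).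

(* Write w = u_(j-1).  Then t_j = w sigma_j w^-1, and if sigma_j swaps z and
   z + 1 then ((a, c)) = ((w z, w (z + 1))); as a and c are not
   congruent mod n, it suffices to show |w (z + 1) - w z| <= n.
   Under a product s_{k-1} s_{k-2} ... s_0 of simple reflections with
   decreasing indices an integer climbs by one at most once every n - 1
   letters, so w raises values by at most about (j - 1) / (n - 1).  Since
   u = e, also u_(j) = u_{n(n-1)} ... u_{j+1}, a product with increasing
   indices, which lowers values by at most about (n(n-1) - j) / (n - 1).  As
   u_(j) = w u_j and u_j preserves {z, z + 1}, u_(j) agrees with w on
   {z, z + 1} up to order, so the two bounds add up to the total length
   n(n-1) and give |w (z + 1) - w z| <= n. *)

From Stdlib Require Import ZArith Lia.
Open Scope Z_scope.

Lemma mod_sub_near (N a b : Z) : 0 < N -> -N <= a - b <= N ->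
  a mod N - b mod N = a - b \/ a mod N - b mod N = a - b + N \/
  a mod N - b mod N = a - b - N.
Proof.
  intros HN Hab.
  pose proof (Z.mod_pos_bound a N HN); pose proof (Z.mod_pos_bound b N HN).
  rewrite (Z.mod_eq a N), (Z.mod_eq b N) in * by lia.
  set (p := a / N) in *; set (q := b / N) in *.
  assert (-2 < q - p < 2) by nia.
  assert (q - p = 0 \/ q - p = 1 \/ q - p = -1) as [E|[E|E]] by lia;
    [left|right; left|right; right]; nia.
Qed.

(* For every residue [e mod N] in the context with |e - base| <= N, records
   its range and its offset from [base mod N], so that [lia] can reason
   about residues. *)
Ltac mod_facts N base :=
  repeat match goal with
  | |- context [?e mod N] =>
      lazymatch goal with
      | _ : 0 <= e mod N < N |- _ => fail
      | _ => pose proof (Z.mod_pos_bound e N ltac:(lia));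
             pose proof (mod_sub_near N e base ltac:(lia) ltac:(lia))
      end
  | _ : context [?e mod N] |- _ =>
      lazymatch goal with
      | _ : 0 <= e mod N < N |- _ => fail
      | _ => pose proof (Z.mod_pos_bound e N ltac:(lia));
             pose proof (mod_sub_near N e base ltac:(lia) ltac:(lia))
      end
  end.

Lemma abs_sub_le_pred_of_mod_neq (N a c : Z) : 0 < N ->
  a mod N <> c mod N -> Z.abs (c - a) <= N -> Z.abs (c - a) <= N - 1.
Proof.
  intros HN Hac Hca; pose proof (mod_sub_near N c a HN ltac:(lia)).
  pose proof (Z.mod_pos_bound a N HN); pose proof (Z.mod_pos_bound c N HN); lia.
Qed.

Section AffineWord.

Variable n : nat.
Hypothesis hn : (2 <= n)%nat.
Local Notation N := (Z.of_nat n).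

Let N_ge2 : 2 <= N.
Proof. lia. Qed.

Lemma sref_cases (i x : Z) :
  ((x - i) mod N = 0 /\ sref n i x = x + 1) \/
  ((x - i) mod N = 1 /\ sref n i x = x - 1) \/
  ((x - i) mod N <> 0 /\ (x - i) mod N <> 1 /\ sref n i x = x).
Proof.
  unfold sref, refl. rewrite Zminus_mod.
  pose proof (mod_sub_near N (x mod N - i mod N) 0).
  pose proof (mod_sub_near N (i + 1) i).
  pose proof (Z.mod_pos_bound x N). pose proof (Z.mod_pos_bound i N).
  pose proof (Z.mod_pos_bound (i + 1) N).
  pose proof (Z.mod_pos_bound (x mod N - i mod N) N).
  rewrite Z.mod_0_l in * by lia.
  destruct (Z.eqb_spec (x mod N) (i mod N));
    [|destruct (Z.eqb_spec (x mod N) ((i + 1) mod N))]; lia.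
Qed.

Lemma sref_involutive (i x : Z) : sref n i (sref n i x) = x.
Proof.
  destruct (sref_cases i x) as [[Hr ->]|[[Hr ->]|[Hr [Hr' E]]]];
    [| |now rewrite !E];
  lazymatch goal with |- sref n i ?y = _ =>
    destruct (sref_cases i y) as [[Hr2 ->]|[[Hr2 ->]|[Hr2 [Hr2' ->]]]] end;
  mod_facts constr:(N) (x - i); lia.
Qed.

Lemma sref_mod (i x : Z) : sref n (i mod N) x = sref n i x.
Proof.
  pose proof (sref_cases (i mod N) x); pose proof (sref_cases i x).
  rewrite Zminus_mod_idemp_r in *; lia.
Qed.

Lemma sigma_succ (k : nat) (x : Z) : sigma n (S k) x = sref n (Z.of_nat k) x.
Proof. unfold sigma; now rewrite Nat.sub_1_r, Nat2Z.inj_mod, sref_mod. Qed.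

Variable b : nat -> bool.

Lemma letter_succ (k : nat) (x : Z) :
  letter n b (S k) x = if b (S k) then sref n (Z.of_nat k) x else x.
Proof. unfold letter; destruct (b (S k)); [apply sigma_succ|easy]. Qed.

Lemma letter_involutive (k : nat) (x : Z) : letter n b k (letter n b k x) = x.
Proof. unfold letter; destruct (b k); [apply sref_involutive|easy]. Qed.

Lemma uprefix_uprefix_inv (k : nat) (x : Z) : uprefix n b k (uprefix_inv n b k x) = x.
Proof.
  revert x; induction k as [|k IH]; intros x; [easy|].
  cbn [uprefix uprefix_inv]; now rewrite letter_involutive.
Qed.

(* While u_(k) is applied letter by letter (u_k first), the potential
   (N - 1) y + ((y - m - 1) mod N) + m of the current value y, where m
   letters are still to come, never increases.  [letter_drop_step] is
   the mirror statement for letters applied in increasing order. *)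
Lemma letter_rise_step (k : nat) (x : Z) :
  let y := letter n b (S k) x in
  (N - 1) * (y - x) + ((y - Z.of_nat k - 1) mod N)
    <= 1 + ((x - Z.of_nat k - 2) mod N).
Proof.
  cbv zeta; rewrite letter_succ; destruct (b (S k));
    [destruct (sref_cases (Z.of_nat k) x) as [[? ->]|[[? ->]|[? [? ->]]]]|];
    mod_facts constr:(N) (x - Z.of_nat k); lia.
Qed.

Lemma uprefix_rise (k : nat) (x : Z) :
  (N - 1) * (uprefix n b k x - x) <= Z.of_nat k + ((x - Z.of_nat k - 1) mod N).
Proof.
  revert x; induction k as [|k IH]; intros x; cbn [uprefix].
  - pose proof (Z.mod_pos_bound (x - 0 - 1) N); lia.
  - specialize (IH (letter n b (S k) x)).
    pose proof (letter_rise_step k x) as Hstep; cbv zeta in Hstep.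
    replace (x - Z.of_nat (S k) - 1) with (x - Z.of_nat k - 2) by lia; lia.
Qed.

Lemma letter_drop_step (k : nat) (x : Z) :
  let y := letter n b (S k) x in
  (N - 1) * (x - y) - ((y - Z.of_nat k - 1) mod N) <= 1 - ((x - Z.of_nat k) mod N).
Proof.
  cbv zeta; rewrite letter_succ; destruct (b (S k));
    [destruct (sref_cases (Z.of_nat k) x) as [[? ->]|[[? ->]|[? [? ->]]]]|];
    mod_facts constr:(N) (x - Z.of_nat k); lia.
Qed.

(* [useg s L] is the product u_{s+L} ... u_{s+1}, so u_{s+1} acts first. *)
Fixpoint useg (s L : nat) (x : Z) : Z :=
  match L with
  | O => x
  | S L' => letter n b (s + L) (useg s L' x)
  end.

Lemma useg_drop (s L : nat) (x : Z) :
  (N - 1) * (x - useg s L x) - ((useg s L x - Z.of_nat (s + L)) mod N)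
    <= Z.of_nat L - ((x - Z.of_nat s) mod N).
Proof.
  induction L as [|L IH]; cbn [useg]; [rewrite Nat.add_0_r; lia|].
  rewrite Nat.add_succ_r.
  pose proof (letter_drop_step (s + L) (useg s L x)) as Hstep; cbv zeta in Hstep.
  replace (_ - Z.of_nat (S (s + L))) with
    (letter n b (S (s + L)) (useg s L x) - Z.of_nat (s + L) - 1) by lia.
  lia.
Qed.

Lemma uprefix_useg (s L : nat) (x : Z) :
  uprefix n b (s + L) (useg s L x) = uprefix n b s x.
Proof.
  induction L as [|L IH]; cbn [useg]; [now rewrite Nat.add_0_r|].
  now rewrite Nat.add_succ_r; cbn [uprefix]; rewrite letter_involutive.
Qed.

Hypothesis hword : forall x : Z, uprefix n b (n * (n - 1)) x = x.

Lemma uprefix_eq_useg (j : nat) (x : Z) : (j <= n * (n - 1))%nat ->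
  uprefix n b j x = useg j (n * (n - 1) - j) x.
Proof.
  intros hj; rewrite <- (uprefix_useg j (n * (n - 1) - j)).
  now replace (j + _)%nat with (n * (n - 1))%nat by lia.
Qed.

Lemma uprefix_gap (k : nat) (z : Z) : (S k <= n * (n - 1))%nat ->
  (z - Z.of_nat k) mod N = 0 ->
  Z.abs (uprefix n b k (z + 1) - uprefix n b k z) <= N.
Proof.
  intros hk hz.
  set (L := (n * (n - 1) - S k)%nat).
  assert (HkL : Z.of_nat k + Z.of_nat L = N * (N - 1) - 1) by (unfold L; nia).
  set (w := uprefix n b k); set (v := useg (S k) L).
  assert (Hpair : w z = v (z + 1) /\ w (z + 1) = v z \/
                  w z = v z /\ w (z + 1) = v (z + 1)).
  { assert (Hw : forall x, w x = v (letter n b (S k) x)).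
    { intros x; unfold v; rewrite <- uprefix_eq_useg by exact hk.
      cbn [uprefix]; now rewrite letter_involutive. }
    rewrite !Hw, !letter_succ; destruct (b (S k)); [left|now right].
    destruct (sref_cases (Z.of_nat k) z) as [[? ->]|[[? ?]|[? [? ?]]]];
    destruct (sref_cases (Z.of_nat k) (z + 1)) as [[? ?]|[[? ->]|[? [? ?]]]];
    mod_facts constr:(N) (z - Z.of_nat k); split; f_equal; lia. }
  pose proof (uprefix_rise k z) as Hw0; pose proof (uprefix_rise k (z + 1)) as Hw1.
  pose proof (useg_drop (S k) L z) as Hv0; pose proof (useg_drop (S k) L (z + 1)) as Hv1.
  fold w in Hw0, Hw1; fold v in Hv0, Hv1.
  pose proof (Z.mod_pos_bound (v z - Z.of_nat (S k + L)) N ltac:(lia)).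
  pose proof (Z.mod_pos_bound (v (z + 1) - Z.of_nat (S k + L)) N ltac:(lia)).
  mod_facts constr:(N) (z - Z.of_nat k).
  assert (Hd : (N - 1) * (w (z + 1) - w z) < (N - 1) * (N + 1) /\
               (N - 1) * (w z - w (z + 1)) < (N - 1) * (N + 1))
    by (destruct Hpair as [[? ?]|[? ?]]; lia).
  destruct Hd as [Hd1 Hd2].
  apply Z.mul_lt_mono_pos_l in Hd1, Hd2; lia.
Qed.

Lemma uprefix_sref_gap (k : nat) (y : Z) : (S k <= n * (n - 1))%nat ->
  Z.abs (uprefix n b k (sref n (Z.of_nat k) y) - uprefix n b k y) <= N.
Proof.
  intros hk; destruct (sref_cases (Z.of_nat k) y) as [[Hy ->]|[[Hy ->]|[_ [_ ->]]]].
  - now apply uprefix_gap.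
  - assert (Hz : (y - 1 - Z.of_nat k) mod N = 0)
      by (mod_facts constr:(N) (y - Z.of_nat k); lia).
    pose proof (uprefix_gap k (y - 1) hk Hz) as Hgap; rewrite Z.sub_add in Hgap; lia.
  - rewrite Z.sub_diag; lia.
Qed.

End AffineWord.

Theorem lemma5p13 (n : nat) (hn : (2 <= n)%nat) (b : nat -> bool)
  (he : forall x : Z, uprefix n b (n * (n - 1)) x = x)
  (j : nat) (hj1 : (1 <= j)%nat) (hj2 : (j <= n * (n - 1))%nat)
  (a c : Z) (hac : a mod Z.of_nat n <> c mod Z.of_nat n)
  (ht : forall x : Z, tinv n b j x = refl n a c x) :
  Z.abs (c - a) <= Z.of_nat n - 1.
Proof.
  destruct j as [|k]; [lia|].
  set (y := uprefix_inv n b k a).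
  assert (Hc : uprefix n b k (sref n (Z.of_nat k) y) = c).
  { pose proof (ht a) as Ha; unfold tinv in Ha.
    replace (S k - 1)%nat with k in Ha by lia; rewrite (sigma_succ n hn) in Ha.
    fold y in Ha; rewrite Ha; unfold refl; rewrite Z.eqb_refl; ring. }
  pose proof (uprefix_sref_gap n hn b he k y hj2) as Hgap.
  rewrite Hc, (uprefix_uprefix_inv n hn b k a : uprefix n b k y = a) in Hgap.
  apply abs_sub_le_pred_of_mod_neq; [lia|exact hac|exact Hgap].
Qed.
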